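(* Let $\mathcal{F}\subset K[x_1,\ldots,x_n]$ be a chordal polynomial set with $x_1<\cdots<x_n$ as a perfect elimination ordering. Let $\mathcal{T}_1,\ldots,\mathcal{T}_r$ be the triangular sets computed by Wang's method applied to $\mathcal{F}$, i.e. the sets $\mathcal{P}$ from triples $(\mathcal{P},\mathcal{Q},0)\in\mathcal{N}(\mathcal{F})$ (reached by the algorithm) such that $\mathcal{P}$ contains no nonzero constant. Then $G(\mathcal{T}_j)\subseteq G(\mathcal{F})$ for $j=1,\ldots,r$.
   Context: Let $K$ be a field and $K[x_1,\ldots,x_n]$ the polynomial ring, with the variables ordered $x_1<\cdots<x_n$. For a polynomial $F$, $\mathrm{supp}(F)$ is the set of variables effectively appearing in $F$. For a set of polynomials $\mathcal{P}$, $\mathrm{supp}(\mathcal{P})=\bigcup_{F\in\mathcal{P}}\mathrm{supp}(F)$. For a nonconstant $F$, $\mathrm{lv}(F)$ is the greatest variable in $\mathrm{supp}(F)$. For a polynomial set $\mathcal{P}$ and $1\le i\le n$, $\mathcal{P}^{(i)}=\{P\in\mathcal{P}:\mathrm{lv}(P)=x_i\}$; constants belong to no $\mathcal{P}^{(i)}$. The associated graph $G(\mathcal{P})$ is the undirected graph whose vertex set is $\mathrm{supp}(\mathcal{P})$, with an edge between distinct $x_i,x_j$ iff some $F\in\mathcal{P}$ has $x_i,x_j\in\mathrm{supp}(F)$. For graphs, $G\subseteq G'$ means that $G$ is a subgraph of $G'$, i.e. both the vertex set and the edge set are contained. An ordering of the vertices of a graph is a perfect elimination ordering if, for every vertex $v$,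 the set consisting of $v$ and all neighbours of $v$ smaller than $v$ is a clique. A polynomial set $\mathcal{P}$ is called chordal with $x_1<\cdots<x_n$ as a perfect elimination ordering if the restriction of this ordering to $\mathrm{supp}(\mathcal{P})$ is a perfect elimination ordering of $G(\mathcal{P})$. For a nonconstant polynomial $F$ with $\mathrm{lv}(F)=x_k$, write $F=I x_k^d+R$ with $d=\deg(F,x_k)$, $I\in K[x_1,\ldots,x_{k-1}]$, and $\deg(R,x_k)<d$. Then $\mathrm{ini}(F)=I$ is the initial of $F$ and $\mathrm{tail}(F)=R$ is the tail of $F$. For $\mathrm{lv}(T)=x_i$, $\mathrm{prem}(P,T)$ is the pseudo-remainder of $P$ by $T$ with respect to $x_i$. The zero polynomial has empty support. Wang's decomposition tree: $\mathcal{N}(\mathcal{F})$ is the smallest set of triples $(\mathcal{P},\mathcal{Q},i)$, where $\mathcal{P},\mathcal{Q}$ are polynomial sets and $0\le i\le n$, satisfying the following: - $(\mathcal{F},\emptyset,n)\in\mathcal{N}(\mathcal{F})$. - If $(\mathcal{P},\mathcal{Q},i)\in\mathcal{N}(\mathcal{F})$ with $i\ge1$ and $\#\mathcal{P}^{(i)}>1$, then for every $T\in\mathcal{P}^{(i)}$ of minimal degree in $x_i$ among the elements of $\mathcal{P}^{(i)}$, both of the following triples belong to $\mathcal{N}(\mathcal{F})$: - the left child $\big((\mathcal{P}\setminus\mathcal{P}^{(i)})\cup\{T\}\cup\{\mathrm{prem}(P,T):P\in\mathcal{P}^{(i)}\},\ \mathcal{Q}\cup\{\mathrm{ini}(T)\},\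 i\big)$; - the right child $\big((\mathcal{P}\setminus\{T\})\cup\{\mathrm{ini}(T),\mathrm{tail}(T)\},\ \mathcal{Q},\ i\big)$. - If $(\mathcal{P},\mathcal{Q},i)\in\mathcal{N}(\mathcal{F})$ with $i\ge1$ and $\#\mathcal{P}^{(i)}\le1$, then $(\mathcal{P},\mathcal{Q},i-1)\in\mathcal{N}(\mathcal{F})$. Wang's method starts from $(\mathcal{F},\emptyset,n)$ and generates triples of $\mathcal{N}(\mathcal{F})$ according to these rules. It outputs the pairs $(\mathcal{P},\mathcal{Q})$ with $(\mathcal{P},\mathcal{Q},0)$ reached and $\mathcal{P}$ containing no nonzero constant. *)

(* Multivariate polynomials K[x_1,...,x_n] are encoded as
   iterated univariate polynomials: mpoly K 0 = K and
   mpoly K n.+1 = {poly (mpoly K n)}, the outermost variable being x_{n+1}.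
   Variables are indexed by 1..n (x_k <-> k). *)
From HB Require Import structures.
From mathcomp Require Import all_boot all_order all_algebra.
From Stdlib Require Import ClassicalEpsilon.
Set Implicit Arguments. Unset Strict Implicit. Unset Printing Implicit Defensive.
Import Order.TTheory GRing.Theory Num.Theory.
Local Open Scope ring_scope.

Fixpoint mpoly (K : fieldType) (n : nat) : idomainType :=
  match n with
  | 0 => K
  | m.+1 => {poly (mpoly K m)}
  end.

Section Defs.
Variable K : fieldType.

Fixpoint supp (n : nat) : mpoly K n -> seq nat :=
  match n return mpoly K n -> seq nat with
  | 0 => fun _ => [::]
  | m.+1 => fun p : {poly (mpoly K m)} =>
      (if (1 < size p)%N then [:: m.+1] else [::]) ++ flatten [seq @supp m c | c <- p]
  end.

(* lv(F): greatest variable in supp(F) (0 for constants, which therefore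
   belong to no P^(i), i >= 1) *)
Definition lv (n : nat) (p : mpoly K n) : nat := foldr maxn 0%N (supp p).

Fixpoint deg (n : nat) (k : nat) : mpoly K n -> nat :=
  match n return mpoly K n -> nat with
  | 0 => fun _ => 0%N
  | m.+1 => fun p : {poly (mpoly K m)} =>
      if k == m.+1 then (size p).-1 else \max_(c <- p) @deg m k c
  end.

(* initial of F w.r.t. lv(F) (meaningless, returns F, for constants) *)
Fixpoint ini (n : nat) : mpoly K n -> mpoly K n :=
  match n return mpoly K n -> mpoly K n with
  | 0 => fun c => c
  | m.+1 => fun p : {poly (mpoly K m)} =>
      if (1 < size p)%N then (lead_coef p)%:P else (@ini m p`_0)%:P
  end.

(* tail of F w.r.t. lv(F) (returns 0 for constants) *)
Fixpoint tail (n : nat) : mpoly K n -> mpoly K n :=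
  match n return mpoly K n -> mpoly K n with
  | 0 => fun _ => 0
  | m.+1 => fun p : {poly (mpoly K m)} =>
      if (1 < size p)%N then p - (lead_coef p)%:P * 'X^((size p).-1)
      else (@tail m p`_0)%:P
  end.

(* R is the pseudo-remainder of P by T w.r.t. x_i:
   ini(T)^e * P = Q * T + R with deg(R,x_i) < deg(T,x_i),
   e = max(deg(P,x_i) - deg(T,x_i) + 1, 0). It is unique (integral domain). *)
Definition is_prem (n : nat) (i : nat) (P T R : mpoly K n) : Prop :=
  exists Q : mpoly K n,
    ini T ^+ ((deg i P).+1 - deg i T) * P = Q * T + R /\ (deg i R < deg i T)%N.

Definition prem (n : nat) (P T : mpoly K n) : mpoly K n :=
  epsilon (inhabits 0) (is_prem (lv T) P T).

(* support of a polynomial set (sets are represented by finite sequences) *)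
Definition suppS (n : nat) (S : seq (mpoly K n)) : seq nat :=
  flatten [seq supp p | p <- S].

Definition edge (n : nat) (S : seq (mpoly K n)) (a b : nat) : Prop :=
  a <> b /\ exists2 f, f \in S & (a \in supp f) && (b \in supp f).

Definition subgraph (n : nat) (S S' : seq (mpoly K n)) : Prop :=
  (forall v, v \in suppS S -> v \in suppS S') /\
  (forall a b, edge S a b -> edge S' a b).

(* x_1 < ... < x_n restricted to supp(S) is a perfect elimination ordering of G(S):
   for every vertex v, {v} u {u < v neighbour of v} is a clique *)
Definition chordal (n : nat) (S : seq (mpoly K n)) : Prop :=
  forall v, v \in suppS S ->
  forall a b,
    (a = v \/ (a < v)%N /\ edge S a v) ->
    (b = v \/ (b < v)%N /\ edge S b v) ->
    a <> b -> edge S a b.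

Definition level (n : nat) (S : seq (mpoly K n)) (i : nat) : seq (mpoly K n) :=
  [seq p <- S | lv p == i].

Inductive wang_node (n : nat) (F : seq (mpoly K n)) :
    seq (mpoly K n) -> seq (mpoly K n) -> nat -> Prop :=
  | wang_root : wang_node F F [::] n
  | wang_left (P Q : seq (mpoly K n)) (i : nat) (T : mpoly K n) :
      wang_node F P Q i -> (1 <= i)%N ->
      (1 < size (undup (level P i)))%N ->
      T \in level P i ->
      (forall P', P' \in level P i -> (deg i T <= deg i P')%N) ->
      wang_node F
        ([seq p <- P | lv p != i] ++ T :: [seq prem p T | p <- level P i])
        (ini T :: Q) i
  | wang_right (P Q : seq (mpoly K n)) (i : nat) (T : mpoly K n) :
      wang_node F P Q i -> (1 <= i)%N ->
      (1 < size (undup (level P i)))%N ->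
      T \in level P i ->
      (forall P', P' \in level P i -> (deg i T <= deg i P')%N) ->
      wang_node F ([seq p <- P | p != T] ++ [:: ini T; tail T]) Q i
  | wang_down (P Q : seq (mpoly K n)) (i : nat) :
      wang_node F P Q i.+1 ->
      (size (undup (level P i.+1)) <= 1)%N ->
      wang_node F P Q i.

End Defs.

(* The polynomials created by Wang's method are ini T and tail T, whose
   variables are among those of T, and the pseudo-remainders prem(P, T) with
   lv P = lv T = x_i, whose variables are among those of P and T.  In the
   latter case every such variable is x_i or a smaller neighbour of x_i in
   G(F), so by the perfect elimination property they form a clique of G(F).
   Hence G(P) is a subgraph of G(F) at every node (P, Q, i) of the tree.
   The variables of prem(P, T) are controlled by computing it through
   repeated cancellation of the leading term, P |-> ini T * P - ini P *
   x_i^(deg P - deg T) * T, which only uses ring operations on P, T and x_i;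
   pseudo-remainders being unique in an integral domain, this is the value
   chosen by prem. *)

From HB Require Import structures.
From mathcomp Require Import all_boot all_order all_algebra polyXY.
From mathcomp Require Import ring zify.
From Stdlib Require Import ClassicalEpsilon.
Set Implicit Arguments. Unset Strict Implicit. Unset Printing Implicit Defensive.
Import GRing.Theory.
Local Open Scope ring_scope.

Lemma bigmax_mem_seq (s : seq nat) : (0 < \max_(v <- s) v)%N -> \max_(v <- s) v \in s.
Proof.
elim: s => [|x s IH]; rewrite ?big_nil // big_cons inE.
by case: (leqP x (\max_(v <- s) v)) => h pos; [rewrite IH ?orbT|]; lia.
Qed.

Lemma bigmax_gt0_seq (T : eqType) (s : seq T) (f : T -> nat) :
  (0 < \max_(c <- s) f c)%N = has (fun c => 0 < f c)%N s.
Proof. by elim: s => [|x s IH]; rewrite ?big_nil // big_cons /= -IH; lia. Qed.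

Lemma bigmax_predn_seq (T : Type) (s : seq T) (f : T -> nat) :
  (\max_(c <- s) (f c).-1 = (\max_(c <- s) f c).-1)%N.
Proof. by elim: s => [|x s IH]; rewrite ?big_nil // !big_cons IH; lia. Qed.

Section ChordalWang.
Variable K : fieldType.

Lemma supp0 n : supp (0 : mpoly K n) = [::].
Proof. by case: n => //= m; rewrite polyseq0. Qed.

Lemma mem_supp_coef m (p : mpoly K m.+1) v j : v \in supp p`_j -> v \in supp p.
Proof.
have [jp|pj] := ltnP j (size p); last by rewrite nth_default // supp0.
move=> vj; rewrite /= mem_cat; apply/orP; right.
by apply/flatten_mapP; exists p`_j; rewrite ?mem_nth.
Qed.

Lemma mem_supp_top m (p : mpoly K m.+1) : (1 < size p)%N -> m.+1 \in supp p.
Proof. by move=> h; rewrite /= h mem_cat inE eqxx. Qed.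

Lemma mem_supp_split m (p : mpoly K m.+1) v :
  v \in supp p -> (v = m.+1 /\ (1 < size p)%N) \/ exists j, v \in supp p`_j.
Proof.
rewrite /= mem_cat => /orP[|/flatten_mapP[c cp vc]].
  by case: ifP => // h; rewrite inE => /eqP ->; left.
by right; have [j _ cj] := nthP 0 cp; exists j; rewrite cj.
Qed.

Lemma supp_bound n (p : mpoly K n) v : v \in supp p -> (0 < v <= n)%N.
Proof. by elim: n p => [//|m IH] p /mem_supp_split [[-> _]|[j /IH]]; lia. Qed.

Definition supported n (S : seq nat) : {pred mpoly K n} :=
  fun p => all (mem S) (supp p).

Lemma supportedP n S (p : mpoly K n) : reflect {subset supp p <= S} (p \in supported S).
Proof. exact: allP. Qed.

Lemma supported_polyP m S (p : mpoly K m.+1) :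
  reflect ((1 < size p -> m.+1 \in S)%N /\ forall j, p`_j \in supported S)
          (p \in supported S).
Proof.
apply: (iffP (supportedP _ _)) => [sub|[top coef] v /mem_supp_split [[-> /top //]|[j]]].
  split=> [/mem_supp_top/sub //|j]; apply/supportedP => v /mem_supp_coef; exact: sub.
exact/supportedP/coef.
Qed.

Lemma supported_coef m S (p : mpoly K m.+1) j : p \in supported S -> p`_j \in supported S.
Proof. by case/supported_polyP. Qed.

Lemma supported_supp n (p : mpoly K n) : p \in supported (supp p).
Proof. exact/supportedP. Qed.

Lemma supported0 n S : (0 : mpoly K n) \in supported S.
Proof. by apply/supportedP => v; rewrite supp0. Qed.

Lemma supportedC m S (c : mpoly K m) : c \in supported S -> (c%:P : mpoly K m.+1) \in supported S.
Proof.
move=> Sc; apply/supported_polyP; split=> [|j]; first by rewrite size_polyC; case: (_ != _).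
by rewrite coefC; case: (j == 0)%N; rewrite ?supported0.
Qed.

Lemma supported_subring n S : subring_closed (supported S : {pred mpoly K n}).
Proof.
elim: n => [|m [S1 SB SM]]; first by split=> // *; apply/supportedP.
have S0 : (0 : mpoly K m) \in supported S by rewrite -(subrr 1) SB.
have SD : {in supported S &, forall u v : mpoly K m, u + v \in supported S}.
  by move=> u v Su Sv; rewrite -[v]opprK -[- v]sub0r SB ?SB.
split; first exact: supportedC.
  move=> a b /supported_polyP [Ta Ca] /supported_polyP [Tb Cb].
  apply/supported_polyP; split=> [|j]; last by rewrite coefB SB.
  by move=> /leq_trans /(_ (size_polyD _ _)); rewrite size_polyN leq_max => /orP[/Ta|/Tb].
move=> a b /supported_polyP [Ta Ca] /supported_polyP [Tb Cb].
apply/supported_polyP; split=> [|j].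
  move=> /leq_trans /(_ (size_polyMleq _ _)).
  case: (ltnP 1 (size a)) => [/Ta //|a1]; case: (ltnP 1 (size b)) => [/Tb //|b1]; lia.
rewrite [_`_j]coefM; apply: (big_ind (fun x : mpoly K m => x \in supported S)) => // i _.
exact: SM.
Qed.

HB.instance Definition _ n S :=
  GRing.isSubringClosed.Build (mpoly K n) (supported S) (supported_subring n S).

Lemma supportedX m S : m.+1 \in S -> ('X : mpoly K m.+1) \in supported S.
Proof.
move=> Sm; apply/supported_polyP; split=> // j.
by rewrite coefX; case: (j == 1)%N; rewrite ?rpred0 ?rpred1.
Qed.

Lemma supported_ini n S (p : mpoly K n) : p \in supported S -> ini p \in supported S.
Proof.
elim: n p => [//|m IH] p Sp /=.
by case: ifP => _; apply: supportedC; [rewrite lead_coefE|apply: IH]; apply: supported_coef.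
Qed.

Lemma supported_tail n S (p : mpoly K n) : p \in supported S -> tail p \in supported S.
Proof.
elim: n p => [|m IH] p Sp /=; first exact: rpred0.
case: ifP => [p1|_]; last exact/supportedC/IH/supported_coef.
have [/(_ p1) Sm _] := supported_polyP _ _ Sp.
apply: rpredB => //; apply: rpredM; last exact/rpredX/supportedX.
by apply: supportedC; rewrite lead_coefE supported_coef.
Qed.

Lemma lvE n (p : mpoly K n) : lv p = \max_(v <- supp p) v.
Proof. by rewrite /lv unlock. Qed.

Lemma lv_ge n (p : mpoly K n) v : v \in supp p -> (v <= lv p)%N.
Proof. by rewrite lvE => vp; apply: leq_bigmax_seq. Qed.

Lemma lv_le n (p : mpoly K n) i : (lv p <= i)%N = all (fun v => v <= i)%N (supp p).
Proof. by rewrite lvE; apply/bigmax_leqP_seq/allP => h v vp *; apply: h. Qed.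

Lemma lv_mem n (p : mpoly K n) : (0 < lv p)%N -> lv p \in supp p.
Proof. by rewrite lvE; apply: bigmax_mem_seq. Qed.

Lemma lv_bound n (p : mpoly K n) : (lv p <= n)%N.
Proof. by rewrite lv_le; apply/allP => v /supp_bound; lia. Qed.

Lemma deg_gt0 n k (p : mpoly K n) : (0 < deg k p)%N = (k \in supp p).
Proof.
elim: n p => [//|m IH] p; rewrite [deg _ _]/=.
case: (eqVneq k m.+1) => [->|km]; rewrite ?eqxx ?(negbTE km).
  apply/idP/idP => [|/mem_supp_split [[_ h]|[j /supp_bound]]]; rewrite ?ltn_predRL //.
    exact: mem_supp_top.
  by rewrite ltnn andbF.
rewrite bigmax_gt0_seq; apply/hasP/idP => [[c cp]|/mem_supp_split [[/eqP]|[j kj]]].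
  rewrite IH => kc; have [j _ cj] := nthP 0 cp.
  by rewrite -cj in kc; apply: mem_supp_coef kc.
  by rewrite (negbTE km).
have jp : (j < size p)%N by rewrite ltnNge; apply: contraL kj => /(nth_default 0) ->; rewrite supp0.
by exists p`_j; rewrite ?mem_nth ?IH.
Qed.

Lemma lv_top m (p : mpoly K m.+1) : lv p = m.+1 -> (1 < size p)%N.
Proof.
move=> hl; have := lv_mem (p := p); rewrite hl => /(_ isT).
by case/mem_supp_split => [[_ //]|[j /supp_bound]]; rewrite ltnn andbF.
Qed.

Lemma lv_small m (p : mpoly K m.+1) : (lv p < m.+1)%N -> (size p <= 1)%N.
Proof. by move=> hl; rewrite leqNgt; apply: contraL hl => /mem_supp_top/lv_ge; rewrite -leqNgt. Qed.

Lemma supp_polyC m (c : mpoly K m) : supp (c%:P : mpoly K m.+1) = supp c.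
Proof. by rewrite /= polyseqC; case: eqP => [->|_] /=; rewrite ?supp0 ?cats0. Qed.

(* [univ k n p] is [p] seen as a univariate polynomial in x_k, with coefficients
   the elements of [mpoly K n] free of x_k. *)
Fixpoint univ (k n : nat) : {rmorphism mpoly K n -> {poly mpoly K n}} :=
  match n return {rmorphism mpoly K n -> {poly mpoly K n}} with
  | 0 => (polyC : {rmorphism _ -> _})
  | m.+1 => if k == m.+1 then (map_poly polyC : {rmorphism _ -> _})
            else ((swapXY \o map_poly (univ k m)) : {rmorphism _ -> _})
  end.

Lemma univS k m (p : mpoly K m.+1) : univ k m.+1 p =
  if k == m.+1 then map_poly polyC p else swapXY (map_poly (univ k m) p).
Proof. by rewrite /=; case: (k == m.+1). Qed.

Lemma univ_inj k n : injective (univ k n).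
Proof.
elim: n => [|m IH] /=; first exact: polyC_inj.
case: (k == m.+1) => /=; first exact/map_inj_poly/raddf0/polyC_inj.
by move=> p q /= /(can_inj swapXYK) /map_inj_poly; apply=> //; exact: raddf0.
Qed.

Lemma deg_univ k n (p : mpoly K n) : deg k p = (size (univ k n p)).-1.
Proof.
elim: n p => [|m IH] p /=; first by rewrite size_polyC; case: (_ != _).
case: (k == m.+1) => /=; first by rewrite size_map_polyC.
rewrite -sizeYE /sizeY size_map_inj_poly ?raddf0 //; last exact: univ_inj.
have -> : \max_(c <- p) deg k c = \max_(c <- p) (size (univ k m c)).-1.
  by apply: eq_bigr => c _; rewrite IH.
rewrite bigmax_predn_seq (big_nth 0) big_mkord; congr (_.-1).
by apply: eq_bigr => j _; rewrite coef_map.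
Qed.

Lemma univ_ini n i (p : mpoly K n) : (0 < i)%N -> lv p = i ->
  univ i n (ini p) = (lead_coef (univ i n p))%:P.
Proof.
elim: n p => [|m IH] p i0 hl; first by move: i0; rewrite -hl.
rewrite !univS; case: (eqVneq i m.+1) => [ei|ne].
  rewrite [ini p]/= (lv_top (etrans hl ei)) map_polyC lead_coef_map_inj //.
  exact: polyC_inj.
have p1 : (size p <= 1)%N by apply: lv_small; have := lv_bound p; lia.
have hl0 : lv p`_0 = i by rewrite -hl {2}(size1_polyC p1) /lv supp_polyC.
rewrite [ini p]/= ltnNge p1 [in RHS](size1_polyC p1) !map_polyC !swapXY_polyC.
rewrite lead_coef_map_inj ?polyC0 //; last exact: polyC_inj.
by rewrite -map_polyC; congr (map_poly _ _); apply: IH.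
Qed.

Fixpoint var (i n : nat) : mpoly K n :=
  match n return mpoly K n with
  | 0 => 0
  | m.+1 => if i == m.+1 then ('X : {poly mpoly K m}) else ((var i m)%:P : {poly mpoly K m})
  end.

Lemma univ_var i n : (0 < i <= n)%N -> univ i n (var i n) = 'X.
Proof.
elim: n => [|m IH] hi; first by lia.
rewrite univS /=; case: (eqVneq i m.+1) => [_|ne]; first by rewrite map_polyX.
rewrite map_polyC swapXY_polyC -(map_polyX polyC); congr (map_poly _ _); apply: IH; lia.
Qed.

Lemma supported_var S i n : i \in S -> var i n \in supported S.
Proof.
move=> iS; elim: n => [|m IH]; first exact: rpred0.
rewrite /=; case: (eqVneq i m.+1) => [ei|_]; last exact: supportedC.
by apply: supportedX; rewrite -ei.
Qed.

Lemma deg_rem_unique n i (T Q R Q' R' : mpoly K n) :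
  Q * T + R = Q' * T + R' -> (deg i R < deg i T)%N -> (deg i R' < deg i T)%N -> R = R'.
Proof.
move=> E; rewrite !deg_univ => dR dR'.
have {}E : univ i n (Q - Q') * univ i n T = univ i n (R' - R).
  rewrite -rmorphM; congr (univ i n _).
  have -> : (Q - Q') * T = Q * T + R - (Q' * T + R') + (R' - R) by ring.
  by rewrite E subrr add0r.
have [QQ'|QQ'] := eqVneq (univ i n (Q - Q')) 0.
  move: E; rewrite QQ' mul0r => /esym; rewrite -(rmorph0 (univ i n)).
  by move=> /univ_inj /eqP; rewrite subr_eq0 => /eqP.
have T0 : univ i n T != 0 by rewrite -size_poly_gt0; lia.
have pred_lt (a c : nat) : (a.-1 < c.-1 -> a < c)%N by lia.
have small : (size (univ i n (R' - R)%R) < size (univ i n T))%N.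
  rewrite rmorphB; apply: leq_ltn_trans (size_polyD _ _) _; rewrite size_polyN.
  by rewrite gtn_max; apply/andP; split; apply: pred_lt.
have no_room (a t : nat) : (0 < a -> (a + t).-1 < t -> False)%N by lia.
case: (no_room (size (univ i n (Q - Q'))) (size (univ i n T))) => //.
  by rewrite size_poly_gt0.
by rewrite -size_mul // E.
Qed.

Lemma deg_ini_mul n i (T P : mpoly K n) e : (0 < i)%N -> lv T = i ->
  (deg i (ini T ^+ e * P) <= deg i P)%N.
Proof.
move=> i0 hT; rewrite !deg_univ rmorphM rmorphXn /= univ_ini // -polyC_exp mul_polyC.
by rewrite -!subn1 leq_sub2r // size_scale_leq.
Qed.

Lemma deg_cancel_lead n i (P T : mpoly K n) : (0 < i)%N -> lv P = i -> lv T = i ->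
  (deg i T <= deg i P)%N ->
  (deg i (ini T * P - ini P * var i n ^+ (deg i P - deg i T) * T) < deg i P)%N.
Proof.
move=> i0 hP hT TP; set D := deg i P; set d := deg i T.
have d0 : (0 < d)%N by rewrite deg_gt0 -hT lv_mem // hT.
have in_ : (0 < i <= n)%N by rewrite i0 -hT lv_bound.
have eP : size (univ i n P) = D.+1 by move: TP d0; rewrite /D /d !deg_univ; lia.
have eT : size (univ i n T) = d.+1 by move: d0; rewrite /d deg_univ; lia.
rewrite deg_univ.
suff : (size (univ i n (ini T * P - ini P * var i n ^+ (D - d) * T)%R) <= D)%N by lia.
rewrite rmorphB !rmorphM rmorphXn /= !univ_ini // univ_var //.
apply/leq_sizeP => j hj; rewrite coefB coefCM -mulrA coefCM coefXnM.
have -> : (j < D - d)%N = false by lia.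
have [Dj|jD] := ltnP D j; first by rewrite !nth_default ?mulr0 ?subrr // ?eP ?eT; lia.
have -> : j = D by lia.
by rewrite subKn // !lead_coefE eP eT /= mulrC subrr.
Qed.

Lemma pseudo_rem_supported n i S (T : mpoly K n) : (0 < i)%N -> lv T = i ->
  T \in supported S -> {in S, forall v, v <= i}%N ->
  forall P, P \in supported S -> forall e, ((deg i P).+1 - deg i T <= e)%N ->
  exists Q R, [/\ ini T ^+ e * P = Q * T + R, (deg i R < deg i T)%N & R \in supported S].
Proof.
move=> i0 hT ST Si P; have [N] := ubnP (deg i P); elim: N P => // N IH P PN SP e eP.
have [PT|TP] := ltnP (deg i P) (deg i T).
  exists 0, (ini T ^+ e * P); rewrite mul0r add0r; split=> //.
    by apply: leq_ltn_trans PT; apply: deg_ini_mul.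
  by rewrite rpredM ?rpredX ?supported_ini.
have hP : lv P = i.
  have iP : i \in supp P.
    by rewrite -deg_gt0; apply: leq_trans TP; rewrite deg_gt0 -hT lv_mem // hT.
  apply/eqP; rewrite eqn_leq lv_ge // andbT lv_le.
  by apply/allP => v /(supportedP _ _ SP) /Si.
set w := ini P * var i n ^+ (deg i P - deg i T).
have Sw : w \in supported S.
  rewrite rpredM ?rpredX ?supported_ini ?supported_var //.
  by rewrite (supportedP _ _ ST) // -hT lv_mem // hT.
have dP1 := deg_cancel_lead i0 hP hT TP; rewrite -/w in dP1.
have SP1 : ini T * P - w * T \in supported S.
  by apply: rpredB; apply: rpredM => //; apply: supported_ini.
have [Q [R [E dR SR]]] := IH _ (leq_trans dP1 PN) SP1 e.-1 (ltac:(lia)).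
exists (Q + ini T ^+ e.-1 * w), R; split=> //.
have -> : e = e.-1.+1 by lia.
rewrite exprSr -mulrA; set c := ini T ^+ e.-1.
have -> : c * (ini T * P) = c * (ini T * P - w * T) + c * w * T by ring.
by rewrite E; ring.
Qed.

Lemma supported_prem n i (P T : mpoly K n) : (0 < i)%N -> lv P = i -> lv T = i ->
  prem P T \in supported (supp P ++ supp T).
Proof.
move=> i0 hP hT; set S := supp P ++ supp T.
have Si : {in S, forall v, v <= i}%N.
  by move=> v; rewrite mem_cat => /orP[] /lv_ge; rewrite ?hP ?hT.
have SP : P \in supported S by apply/supportedP => v vP; rewrite mem_cat vP.
have ST : T \in supported S by apply/supportedP => v vT; rewrite mem_cat vT orbT.
have [Q [R [E dR SR]]] := pseudo_rem_supported i0 hT ST Si SP (leqnn _).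
have [Q' [E' dR']] : is_prem (lv T) P T (prem P T).
  by apply: epsilon_spec; exists R, Q; rewrite hT.
by rewrite hT in E' dR'; rewrite (deg_rem_unique (etrans (esym E') E) dR' dR).
Qed.

Definition clique n (F : seq (mpoly K n)) (s : seq nat) : Prop :=
  {subset s <= suppS F} /\ forall a b, a \in s -> b \in s -> a <> b -> edge F a b.

Lemma clique_sub n (F : seq (mpoly K n)) s s' :
  {subset s' <= s} -> clique F s -> clique F s'.
Proof. by move=> s's [sF sE]; split=> [v /s's /sF //|a b /s's ? /s's]; apply: sE. Qed.

Lemma subgraph_cliques n (P F : seq (mpoly K n)) :
  (forall q, q \in P -> clique F (supp q)) -> subgraph P F.
Proof.
move=> cl; split=> [v /flatten_mapP [q qP vq]|a b [ab [q qP /andP [aq bq]]]].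
  by case: (cl q qP) => /(_ v vq).
by case: (cl q qP) => _; apply.
Qed.

Lemma clique_supp n (P F : seq (mpoly K n)) p :
  subgraph P F -> p \in P -> clique F (supp p).
Proof.
move=> [PF EF] pP; split=> [v vp|a b ap bp ab]; first by apply/PF/flatten_mapP; exists p.
by apply: EF; split=> //; exists p; rewrite ?ap.
Qed.

Lemma edge_lv n (P F : seq (mpoly K n)) q x : subgraph P F -> q \in P ->
  (0 < lv q)%N -> x \in supp q -> x = lv q \/ (x < lv q)%N /\ edge F x (lv q).
Proof.
move=> PF qP q0 xq; have [-> | xl] := eqVneq x (lv q); [by left | right].
split; first by rewrite ltn_neqAle xl lv_ge.
by case: (clique_supp PF qP) => _; apply=> //; [apply: lv_mem | apply/eqP].
Qed.

Lemma clique_lv n (P F : seq (mpoly K n)) p t : chordal F -> subgraph P F ->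
  p \in P -> t \in P -> lv p = lv t -> (0 < lv p)%N -> clique F (supp p ++ supp t).
Proof.
move=> chF PF pP tP pt p0.
have [[pF _] [tF _]] := (clique_supp PF pP, clique_supp PF tP).
split=> [v|a b]; first by rewrite mem_cat => /orP[/pF|/tF].
have near x : x \in supp p ++ supp t -> x = lv p \/ (x < lv p)%N /\ edge F x (lv p).
  rewrite mem_cat => /orP[] xs; first exact: edge_lv PF pP p0 xs.
  by rewrite pt; apply: edge_lv PF tP _ xs; rewrite -pt.
by move=> /near ha /near hb; apply: chF ha hb; apply/pF/lv_mem.
Qed.

Lemma wang_node_subgraph n (F P Q : seq (mpoly K n)) i :
  chordal F -> wang_node F P Q i -> subgraph P F.
Proof.
move=> chF; elim=> {P Q i} [|P Q i T _ PF i0 _ TP _|P Q i T _ PF i0 _ TP _|//].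
- by split.
- move: TP; rewrite mem_filter => /andP [/eqP hT TP].
  apply: subgraph_cliques => q; rewrite mem_cat mem_filter => /orP [/andP [_ qP]|].
    exact: clique_supp qP.
  rewrite inE => /orP [/eqP -> | /mapP [p]]; first exact: clique_supp TP.
  rewrite mem_filter => /andP [/eqP hp pP] ->.
  apply: clique_sub (supportedP _ _ (supported_prem i0 hp hT)) _.
  by apply: clique_lv pP TP _ _; rewrite ?hp ?hT.
- move: TP; rewrite mem_filter => /andP [_ TP].
  apply: subgraph_cliques => q; rewrite mem_cat mem_filter => /orP [/andP [_ qP]|].
    exact: clique_supp qP.
  have TT := clique_supp PF TP.
  rewrite !inE => /orP [] /eqP ->; apply: clique_sub TT; apply/supportedP.
    exact/supported_ini/supported_supp.
  exact/supported_tail/supported_supp.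
Qed.

End ChordalWang.

Theorem corollary4p4 (K : fieldType) (n : nat) (F : seq (mpoly K n)) :
  chordal F ->
  forall (T Q : seq (mpoly K n)),
    wang_node F T Q 0 ->
    (forall p, p \in T -> supp p = [::] -> p = 0) ->
    subgraph T F.
Proof. by move=> chF T Q node _; exact: wang_node_subgraph chF node. Qed.
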